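(* Let $n\ge2$ and let $e\in\mathcal{I}^{\ast}_n$ be an idempotent of rank $n-1$ (that is, $e$ has one block $\{x,y,x',y'\}$ with $x\ne y$ and blocks $\{t,t'\}$ for all $t\ne x,y$). Then the maximal subgroup $G(e)$ of $\mathcal{I}^{\ast}_n$ with identity $e$ is an isolated subsemigroup of $\mathcal{I}^{\ast}_n$.
   Context: Let $X=\{1,\dots,n\}$, $X'=\{1',\dots,n'\}$. $\mathcal{I}^{\ast}_n$ is the set of partitions of $X\cup X'$ all of whose blocks meet both $X$ and $X'$, with product: regard $\alpha$ as a partition of $X\cup X''$ and $\beta$ as a partition of $X''\cup X'$ ($X''$ a third copy of $X$), and let $\alpha\beta$ be the partition of $X\cup X'$ induced by the equivalence on $X\cup X''\cup X'$ generated by the blocks of both. Rank = number of blocks. $G(e)$ is the $\mathcal{H}$-class of $e$. A subsemigroup $T$ of a semigroup $S$ is isolated if for all $a\in S$ and $k\ge1$, $a^k\in T$ implies $a\in T$. *)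

From mathcomp Require Import all_boot.
Set Implicit Arguments. Unset Strict Implicit. Unset Printing Implicit Defensive.

(* Points of X ∪ X': inl i is the point i+1 of X, inr i is the point (i+1)' of X'. *)
Definition pt (n : nat) : finType := ('I_n + 'I_n)%type.

(* A partition of X ∪ X' is represented by its equivalence relation,
   given as the set of related pairs. *)
Definition part (n : nat) := {set (pt n * pt n)}.

Definition rel_of n (a : part n) : rel (pt n) := fun x y => (x, y) \in a.

Definition is_equiv n (a : part n) : Prop :=
  [/\ forall x, rel_of a x x,
      forall x y, rel_of a x y -> rel_of a y x &
      forall x y z, rel_of a x y -> rel_of a y z -> rel_of a x z].

Definition block n (a : part n) (x : pt n) : {set pt n} := [set y | rel_of a x y].

Definition Istar n (a : part n) : Prop :=
  is_equiv a /\
  forall x : pt n, (exists i, rel_of a x (inl i)) /\ (exists i, rel_of a x (inr i)).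

Definition rank n (a : part n) : nat := #|[set block a x | x : pt n]|.

(* Three copies X, X'', X' : (0,i) = i, (1,i) = i'', (2,i) = i' *)
Definition pt3 (n : nat) : finType := ('I_3 * 'I_n)%type.

Definition c0 : 'I_3 := @Ordinal 3 0 isT.
Definition c1 : 'I_3 := @Ordinal 3 1 isT.
Definition c2 : 'I_3 := @Ordinal 3 2 isT.

(* alpha regarded on X ∪ X'' *)
Definition embL n (x : pt n) : pt3 n :=
  match x with inl i => (c0, i) | inr i => (c1, i) end.
(* beta regarded on X'' ∪ X' *)
Definition embR n (x : pt n) : pt3 n :=
  match x with inl i => (c1, i) | inr i => (c2, i) end.
Definition embO n (x : pt n) : pt3 n :=
  match x with inl i => (c0, i) | inr i => (c2, i) end.

Definition edge3 n (a b : part n) : rel (pt3 n) := fun u v =>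
  [exists p in a, (embL p.1 == u) && (embL p.2 == v)] ||
  [exists p in b, (embR p.1 == u) && (embR p.2 == v)].

(* product: the equivalence generated by the blocks of both, restricted to X ∪ X' *)
Definition pmul n (a b : part n) : part n :=
  [set p : pt n * pt n | connect (edge3 a b) (embO p.1) (embO p.2)].

(* a^k for k >= 1 *)
Definition ppow n (a : part n) (k : nat) : part n := iter k.-1 (fun x => pmul x a) a.

(* Green's preorders and the H relation in the semigroup I*_n (using S^1) *)
Definition leR n (a b : part n) : Prop :=
  a = b \/ exists s, Istar s /\ a = pmul b s.
Definition leL n (a b : part n) : Prop :=
  a = b \/ exists s, Istar s /\ a = pmul s b.
Definition Hrel n (a b : part n) : Prop :=
  [/\ leR a b, leR b a, leL a b & leL b a].

Definition Hclass n (e : part n) : part n -> Prop := fun a => Istar a /\ Hrel a e.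

Definition is_subsemigroup n (T : part n -> Prop) : Prop :=
  (forall a, T a -> Istar a) /\ (forall a b, T a -> T b -> T (pmul a b)).

Definition isolated n (T : part n -> Prop) : Prop :=
  forall a, Istar a -> forall k, 1 <= k -> T (ppow a k) -> T a.

(* An idempotent e of I*_n relates every i to i', so it is determined by its upper kernel
   (the restriction of e to X).  An element a of I*_n is H-related to e exactly when its
   upper and lower kernels both equal that of e: then e = a a* = a* a, while a = e a = a e.
   Multiplication only coarsens kernels, the upper kernel of a b containing that of a, with
   equality when the lower kernel of a is the upper kernel of b; this makes G(e) closed.
   For isolation, the kernels of a are contained in those of a^k, so by counting blocks
   n - 1 = rank a^k <= rank a <= n.  If rank a = n - 1 the kernels of a and a^k coincide;
   if rank a = n the upper kernel of a is trivial, hence so is that of every power of a,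
   contradicting rank a^k = n - 1. *)

From mathcomp Require Import all_boot zify.
Set Implicit Arguments. Unset Strict Implicit. Unset Printing Implicit Defensive.

Lemma homo_connect (T : finType) (U : Type) (e : rel T) (r : rel U) (g : T -> U) :
  reflexive r -> transitive r -> {homo g : u v / e u v >-> r u v} ->
  {homo g : u v / connect e u v >-> r u v}.
Proof.
move=> r_refl r_trans ge u v /connectP [p + ->]; elim: p u => [|w p IHp] u /=.
  by rewrite r_refl.
by case/andP=> /ge guw /IHp wv; exact: r_trans guw wv.
Qed.

Section FactorCard.
Variables (T U : finType) (f g : T -> U).
Hypothesis fg : forall i j, f i = f j -> g i = g j.

Lemma imset_factor :
  exists h : U -> U, [set g i | i : T] = h @: [set f i | i : T] /\ forall i, h (f i) = g i.
Proof.
pose h y := if [pick i | f i == y] is Some i then g i else y.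
have hf i : h (f i) = g i.
  by rewrite /h; case: pickP => [j /eqP /fg // | /(_ i)]; rewrite eqxx.
by exists h; split=> //; rewrite -imset_comp; apply: eq_imset => i /=; rewrite hf.
Qed.

Lemma card_imset_factor : #|[set g i | i : T]| <= #|[set f i | i : T]|.
Proof. by have [h [-> _]] := imset_factor; apply: leq_imset_card. Qed.

Lemma card_imset_factor_eq :
  #|[set g i | i : T]| = #|[set f i | i : T]| -> forall i j, g i = g j -> f i = f j.
Proof.
have [h [-> hf]] := imset_factor => /eqP /imset_injP inj_h i j gij.
by apply: inj_h; rewrite ?imset_f // !hf.
Qed.

End FactorCard.

Section IstarSemigroup.
Variable n : nat.
Implicit Types (a b c e : part n) (x y : pt n) (i j : 'I_n).

Definition upper a i j := rel_of a (inl i) (inl j).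
Definition lower a i j := rel_of a (inr i) (inr j).

Definition idx x : 'I_n := match x with inl i => i | inr i => i end.

Lemma Istar_refl a x : Istar a -> rel_of a x x.
Proof. by case=> [[]]. Qed.

Lemma Istar_sym a x y : Istar a -> rel_of a x y -> rel_of a y x.
Proof. by case=> [[_ + _] _]; apply. Qed.

Lemma Istar_trans a x y z : Istar a -> rel_of a x y -> rel_of a y z -> rel_of a x z.
Proof. by case=> [[_ _ +] _]; apply. Qed.

Lemma Istar_inl a x : Istar a -> exists i, rel_of a x (inl i).
Proof. by case=> _ /(_ x) []. Qed.

Lemma Istar_inr a x : Istar a -> exists i, rel_of a x (inr i).
Proof. by case=> _ /(_ x) []. Qed.

Definition top_pt a x : 'I_n := odflt (idx x) [pick i | rel_of a x (inl i)].

Lemma top_ptP a x : Istar a -> rel_of a x (inl (top_pt a x)).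
Proof.
rewrite /top_pt; case: pickP => [//| none] /(Istar_inl x) [i].
by rewrite none.
Qed.

Lemma pmulE a b x y : rel_of (pmul a b) x y = connect (edge3 a b) (embO x) (embO y).
Proof. by rewrite /rel_of /pmul inE. Qed.

Lemma edge3L a b x y : rel_of a x y -> edge3 a b (embL x) (embL y).
Proof. by move=> axy; apply/orP; left; apply/existsP; exists (x, y); rewrite !eqxx !andbT. Qed.

Lemma edge3R a b x y : rel_of b x y -> edge3 a b (embR x) (embR y).
Proof. by move=> bxy; apply/orP; right; apply/existsP; exists (x, y); rewrite !eqxx !andbT. Qed.

Lemma edge3P a b u v : edge3 a b u v ->
  (exists x y, [/\ rel_of a x y, u = embL x & v = embL y]) \/
  (exists x y, [/\ rel_of b x y, u = embR x & v = embR y]).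
Proof.
by case/orP => /existsP [[x y] /andP [xy /andP [/eqP <- /eqP <-]]]; [left | right];
  exists x, y.
Qed.

Lemma connect_embL a b x y : rel_of a x y -> connect (edge3 a b) (embL x) (embL y).
Proof. by move/edge3L/connect1. Qed.

Lemma connect_embR a b x y : rel_of b x y -> connect (edge3 a b) (embR x) (embR y).
Proof. by move/edge3R/connect1. Qed.

Lemma pmul_homo a b c (g : pt3 n -> pt n) : Istar c ->
  (forall x y, rel_of a x y -> rel_of c (g (embL x)) (g (embL y))) ->
  (forall x y, rel_of b x y -> rel_of c (g (embR x)) (g (embR y))) ->
  forall x y, rel_of (pmul a b) x y -> rel_of c (g (embO x)) (g (embO y)).
Proof.
move=> Hc gL gR x y; rewrite pmulE; apply: homo_connect.
- by move=> z; apply: Istar_refl.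
- by move=> z u v; apply: Istar_trans.
by move=> u v /edge3P [[x' [y' [xy -> ->]]] | [x' [y' [xy -> ->]]]]; [apply: gL | apply: gR].
Qed.

Lemma edge3_sym a b : Istar a -> Istar b -> symmetric (edge3 a b).
Proof.
move=> Ha Hb; apply: symmetric_from_pre => u v.
by case/edge3P => [[x [y [xy -> ->]]] | [x [y [xy -> ->]]]];
  [apply/edge3L/Istar_sym | apply/edge3R/Istar_sym].
Qed.

Lemma Istar_pmul a b : Istar a -> Istar b -> Istar (pmul a b).
Proof.
move=> Ha Hb; split; [split | ].
- by move=> x; rewrite pmulE connect0.
- by move=> x y; rewrite !pmulE (sym_connect_sym (edge3_sym Ha Hb)).
- by move=> x y z; rewrite !pmulE; apply: connect_trans.
case=> i; split.
- by exists i; rewrite pmulE connect0.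
- have [j aij] := Istar_inr (inl i) Ha; have [m bjm] := Istar_inr (inl j) Hb.
  exists m; rewrite pmulE.
  exact: connect_trans (connect_embL b aij) (connect_embR a bjm).
- have [j bij] := Istar_inl (inr i) Hb; have [m ajm] := Istar_inl (inr j) Ha.
  exists m; rewrite pmulE.
  exact: connect_trans (connect_embR a bij) (connect_embL b ajm).
- by exists i; rewrite pmulE connect0.
Qed.

Lemma sub_upper_pmul a b i j : upper a i j -> upper (pmul a b) i j.
Proof. by rewrite /upper pmulE => aij; exact (connect_embL b aij). Qed.

Lemma sub_lower_pmul a b i j : lower b i j -> lower (pmul a b) i j.
Proof. by rewrite /lower pmulE => bij; exact (connect_embR a bij). Qed.

Lemma upper_pmul_sub a b : Istar a -> Istar b ->
  (forall i j, upper b i j -> lower a i j) ->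
  forall i j, upper (pmul a b) i j -> upper a i j.
Proof.
move=> Ha Hb ba i j.
(* Read X and X'' as the two sides of a, and send each point of X' to a b-related point
   of X'': every edge of the product then becomes an a-relation. *)
pose h x := match x with inl k => k | inr k => top_pt b (inr k) end.
pose g (u : pt3 n) : pt n :=
  match nat_of_ord u.1 with 0 => inl u.2 | 1 => inr u.2 | _ => inr (top_pt b (inr u.2)) end.
apply: (pmul_homo (g := g) Ha) => [[] k [] l | x y bxy] //.
have hR z : rel_of b z (inl (h z)) by case: z => k; [apply: Istar_refl | apply: top_ptP].
have gR z : g (embR z) = inr (h z) by case: z.
rewrite !gR; apply: (ba (h x) (h y)).
exact: Istar_trans Hb (Istar_sym Hb (hR x)) (Istar_trans Hb bxy (hR y)).
Qed.

Definition flip x : pt n := match x with inl i => inr i | inr i => inl i end.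

Definition ptr a : part n := [set p | (flip p.1, flip p.2) \in a].

Lemma flipK : involutive flip.
Proof. by case. Qed.

Lemma ptrE a x y : rel_of (ptr a) x y = rel_of a (flip x) (flip y).
Proof. by rewrite /rel_of inE. Qed.

Lemma ptrK : involutive ptr.
Proof. by move=> a; apply/setP => -[x y]; rewrite !inE /= !flipK. Qed.

Lemma upper_ptr a i j : upper (ptr a) i j = lower a i j.
Proof. by rewrite /upper ptrE. Qed.

Lemma lower_ptr a i j : lower (ptr a) i j = upper a i j.
Proof. by rewrite /lower ptrE. Qed.

Lemma Istar_ptr a : Istar a -> Istar (ptr a).
Proof.
move=> Ha; split; [split | move=> x].
- by move=> x; rewrite ptrE; apply: Istar_refl.
- by move=> x y; rewrite !ptrE; apply: Istar_sym.
- by move=> x y z; rewrite !ptrE; apply: Istar_trans.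
have [i ai] := Istar_inr (flip x) Ha; have [j aj] := Istar_inl (flip x) Ha.
by split; [exists i | exists j]; rewrite ptrE.
Qed.

Definition rev3 (u : pt3 n) : pt3 n := (rev_ord u.1, u.2).

Lemma rev3_embL x : rev3 (embL x) = embR (flip x).
Proof. by case: x => i; congr pair; apply: val_inj. Qed.

Lemma rev3_embR x : rev3 (embR x) = embL (flip x).
Proof. by case: x => i; congr pair; apply: val_inj. Qed.

Lemma rev3_embO x : rev3 (embO x) = embO (flip x).
Proof. by case: x => i; congr pair; apply: val_inj. Qed.

Lemma connect_edge3_ptr a b u v :
  connect (edge3 a b) u v -> connect (edge3 (ptr b) (ptr a)) (rev3 u) (rev3 v).
Proof.
apply: homo_connect; [exact: connect0 | exact: connect_trans | move=> {}u {}v].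
case/edge3P => [[x [y [xy -> ->]]] | [x [y [xy -> ->]]]].
  by rewrite !rev3_embL; apply: connect_embR; rewrite ptrE !flipK.
by rewrite !rev3_embR; apply: connect_embL; rewrite ptrE !flipK.
Qed.

Lemma ptr_pmul a b : ptr (pmul a b) = pmul (ptr b) (ptr a).
Proof.
apply/setP => -[x y]; change (rel_of (ptr (pmul a b)) x y = rel_of (pmul (ptr b) (ptr a)) x y).
rewrite ptrE !pmulE; apply/idP/idP => [/connect_edge3_ptr | /connect_edge3_ptr].
  by rewrite !rev3_embO !flipK.
by rewrite !ptrK !rev3_embO.
Qed.

Lemma lower_pmul_sub a b : Istar a -> Istar b ->
  (forall i j, lower a i j -> upper b i j) ->
  forall i j, lower (pmul a b) i j -> lower b i j.
Proof.
move=> Ha Hb ab i j; rewrite -upper_ptr ptr_pmul -upper_ptr.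
apply: upper_pmul_sub; [exact: Istar_ptr | exact: Istar_ptr | move=> k l].
by rewrite upper_ptr lower_ptr; apply: ab.
Qed.

Definition projection e := forall i, rel_of e (inl i) (inr i).

Lemma projection_relE e x y : Istar e -> projection e ->
  rel_of e x y = upper e (idx x) (idx y).
Proof.
move=> He Pe; have toX z : rel_of e z (inl (idx z)).
  by case: z => i; [apply: Istar_refl | apply/Istar_sym/Pe].
apply/idP/idP => [exy | exy].
  exact: Istar_trans He (Istar_sym He (toX x)) (Istar_trans He exy (toX y)).
exact: Istar_trans He (toX x) (Istar_trans He exy (Istar_sym He (toX y))).
Qed.

Lemma projection_lower e i j : Istar e -> projection e -> lower e i j = upper e i j.
Proof. by move=> He Pe; rewrite /lower projection_relE. Qed.

Lemma ptr_projection e : Istar e -> projection e -> ptr e = e.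
Proof.
move=> He Pe; apply/setP => -[x y]; change (rel_of (ptr e) x y = rel_of e x y).
by rewrite ptrE !projection_relE //; case: x; case: y.
Qed.

Lemma idempotent_projection e : Istar e -> pmul e e = e -> projection e.
Proof.
move=> He ee.
have ee_rel x y : connect (edge3 e e) (embO x) (embO y) -> rel_of e x y.
  by move=> p; rewrite -ee pmulE.
have upper_lower k l : upper e k l -> lower e k l.
  move=> kl; have [t kt] := Istar_inl (inr k) He; have [t' lt'] := Istar_inl (inr l) He.
  have tt' : rel_of e (inl t) (inl t').
    apply: ee_rel; apply: connect_trans (connect_embL e (Istar_sym He kt)) _.
    exact: connect_trans (connect_embR e kl) (connect_embL e lt').
  exact: Istar_trans He kt (Istar_trans He tt' (Istar_sym He lt')).
move=> i; have [j ij] := Istar_inr (inl i) He; have [m jm] := Istar_inr (inl j) He.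
have im : rel_of e (inl i) (inr m).
  by apply: ee_rel; apply: connect_trans (connect_embL e ij) (connect_embR e jm).
have /upper_lower lij : upper e i j := Istar_trans He im (Istar_sym He jm).
exact: Istar_trans He ij (Istar_sym He lij).
Qed.

Lemma pmul_projection_l e a : Istar e -> projection e -> Istar a ->
  (forall i j, upper e i j -> upper a i j) -> pmul e a = a.
Proof.
move=> He Pe Ha ea; apply/setP => -[x y]; change (rel_of (pmul e a) x y = rel_of a x y).
apply/idP/idP => [| axy].
  pose g (u : pt3 n) : pt n := if nat_of_ord u.1 is 2 then inr u.2 else inl u.2.
  have gO z : g (embO z) = z by case: z.
  have gL z : g (embL z) = inl (idx z) by case: z.
  have gR z : g (embR z) = z by case: z.
  have key := pmul_homo (g := g) Ha.
  move/key; rewrite !gO; apply=> [x' y' | x' y']; rewrite ?gL ?gR //.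
  by rewrite projection_relE //; apply: ea.
have toR z : connect (edge3 e a) (embO z) (embR z).
  by case: z => i; [exact (connect_embL a (Pe i)) | exact: connect0].
rewrite pmulE; apply: connect_trans (toR x) (connect_trans (connect_embR e axy) _).
by rewrite (sym_connect_sym (edge3_sym He Ha)).
Qed.

Lemma pmul_projection_r e a : Istar e -> projection e -> Istar a ->
  (forall i j, upper e i j -> lower a i j) -> pmul a e = a.
Proof.
move=> He Pe Ha ea; apply: (can_inj ptrK); rewrite ptr_pmul ptr_projection //.
apply: pmul_projection_l => // [|i j]; first exact: Istar_ptr.
by rewrite upper_ptr; apply: ea.
Qed.

Lemma pmul_ptr_relE a x y : Istar a ->
  rel_of (pmul a (ptr a)) x y = upper a (idx x) (idx y).
Proof.
move=> Ha; apply/idP/idP => [| axy].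
  pose g (u : pt3 n) : pt n := if nat_of_ord u.1 is 1 then inr u.2 else inl u.2.
  have gO z : g (embO z) = inl (idx z) by case: z.
  have gL z : g (embL z) = z by case: z.
  have gR z : g (embR z) = flip z by case: z.
  have key := pmul_homo (g := g) Ha.
  move/key; rewrite !gO; apply=> [x' y' | x' y']; rewrite ?gL ?gR //.
  by rewrite ptrE.
have toX z : connect (edge3 a (ptr a)) (embO z) (embL (inl (idx z))).
  case: z => i; first exact: connect0.
  have [j aij] := Istar_inr (inl i) Ha.
  have aij' : rel_of (ptr a) (inr i) (inl j) by rewrite ptrE.
  exact: connect_trans (connect_embR a aij') (connect_embL (ptr a) (Istar_sym Ha aij)).
rewrite pmulE; apply: connect_trans (toX x) (connect_trans (connect_embL _ axy) _).
by rewrite (sym_connect_sym (edge3_sym Ha (Istar_ptr Ha))).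
Qed.

Lemma pmul_ptr_projection a e : Istar a -> Istar e -> projection e ->
  upper a =2 upper e -> pmul a (ptr a) = e.
Proof.
move=> Ha He Pe ae; apply/setP => -[x y]; change (rel_of (pmul a (ptr a)) x y = rel_of e x y).
by rewrite pmul_ptr_relE // projection_relE // ae.
Qed.

Lemma Hrel_kernels a e : Hrel a e -> upper a =2 upper e /\ lower a =2 lower e.
Proof.
have sub_upper b c : leR b c -> forall i j, upper c i j -> upper b i j.
  by case=> [-> // | [s [_ ->]] i j]; apply: sub_upper_pmul.
have sub_lower b c : leL b c -> forall i j, lower c i j -> lower b i j.
  by case=> [-> // | [s [_ ->]] i j]; apply: sub_lower_pmul.
case=> aRe eRa aLe eLa; split=> i j; apply/idP/idP.
- exact: sub_upper eRa i j.
- exact: sub_upper aRe i j.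
- exact: sub_lower eLa i j.
- exact: sub_lower aLe i j.
Qed.

Lemma Hrel_of_kernels a e : Istar a -> Istar e -> projection e ->
  upper a =2 upper e -> lower a =2 lower e -> Hrel a e.
Proof.
move=> Ha He Pe ae ae'.
have lower_a : lower a =2 upper e by move=> i j; rewrite ae' projection_lower.
split; right.
- by exists a; split=> //; rewrite pmul_projection_l // => i j; rewrite ae.
- by exists (ptr a); rewrite (pmul_ptr_projection Ha He Pe ae); split=> //; apply: Istar_ptr.
- by exists a; split=> //; rewrite pmul_projection_r // => i j; rewrite lower_a.
have ptr_ae : upper (ptr a) =2 upper e by move=> i j; rewrite upper_ptr lower_a.
exists (ptr a); split; first exact: Istar_ptr.
by rewrite -{2}(ptrK a) (pmul_ptr_projection (Istar_ptr Ha) He Pe ptr_ae).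
Qed.

Lemma Hclass_pmul e a b : Istar e -> projection e ->
  Hclass e a -> Hclass e b -> Hclass e (pmul a b).
Proof.
move=> He Pe [Ha /Hrel_kernels [aU aL]] [Hb /Hrel_kernels [bU bL]].
have ab i j : lower a i j = upper b i j by rewrite aL bU projection_lower.
have ab_sub i j : lower a i j -> upper b i j by rewrite ab.
have ba_sub i j : upper b i j -> lower a i j by rewrite ab.
split; first exact: Istar_pmul.
apply: Hrel_of_kernels => //; first exact: Istar_pmul.
- move=> i j; apply/idP/idP; last by rewrite -aU; apply: sub_upper_pmul.
  by move/(upper_pmul_sub Ha Hb ba_sub); rewrite aU.
- move=> i j; apply/idP/idP; last by rewrite -bL; apply: sub_lower_pmul.
  by move/(lower_pmul_sub Ha Hb ab_sub); rewrite bL.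
Qed.

Lemma eq_block a x y : Istar a -> (block a x == block a y) = rel_of a x y.
Proof.
move=> Ha; apply/eqP/idP => [xy | axy].
  have : y \in block a y by rewrite inE; apply: Istar_refl.
  by rewrite -xy inE.
apply/setP => z; rewrite !inE; apply/idP/idP => [xz | yz].
  exact: Istar_trans Ha (Istar_sym Ha axy) xz.
exact: Istar_trans Ha axy yz.
Qed.

Lemma rank_blocks a (f : 'I_n -> pt n) : Istar a ->
  (forall x, exists i, rel_of a x (f i)) -> rank a = #|[set block a (f i) | i : 'I_n]|.
Proof.
move=> Ha cover; apply: eq_card => B; apply/imsetP/imsetP => [[x _ ->] | [i _ ->]].
  by have [i xi] := cover x; exists i => //; apply/eqP; rewrite eq_block.
by exists (f i).
Qed.

Lemma rank_upper a : Istar a -> rank a = #|[set block a (inl i) | i : 'I_n]|.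
Proof. by move=> Ha; apply: rank_blocks => // x; apply: Istar_inl. Qed.

Lemma rank_lower a : Istar a -> rank a = #|[set block a (inr i) | i : 'I_n]|.
Proof. by move=> Ha; apply: rank_blocks => // x; apply: Istar_inr. Qed.

Lemma rank_le_n a : Istar a -> rank a <= n.
Proof.
by move=> Ha; rewrite rank_upper //; apply: leq_trans (leq_imset_card _ _) _; rewrite card_ord.
Qed.

Section Refinement.
Variables (a b : part n) (f : 'I_n -> pt n).
Hypotheses (Ha : Istar a) (Hb : Istar b).
Hypothesis ab : forall i j, rel_of a (f i) (f j) -> rel_of b (f i) (f j).

Lemma blocks_factor i j : block a (f i) = block a (f j) -> block b (f i) = block b (f j).
Proof. by move/eqP; rewrite eq_block // => /ab; rewrite -eq_block // => /eqP. Qed.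

Lemma card_blocks_le :
  #|[set block b (f i) | i : 'I_n]| <= #|[set block a (f i) | i : 'I_n]|.
Proof. exact: card_imset_factor blocks_factor. Qed.

Lemma card_blocks_eq :
  #|[set block b (f i) | i : 'I_n]| = #|[set block a (f i) | i : 'I_n]| ->
  forall i j, rel_of b (f i) (f j) -> rel_of a (f i) (f j).
Proof.
move/(card_imset_factor_eq blocks_factor) => fab i j.
by rewrite -!eq_block // => /eqP /fab /eqP.
Qed.

End Refinement.

Lemma rank_le_upper a b : Istar a -> Istar b ->
  (forall i j, upper a i j -> upper b i j) -> rank b <= rank a.
Proof. by move=> Ha Hb ab; rewrite !rank_upper //; apply: card_blocks_le. Qed.

Lemma upper_rank_eq a b : Istar a -> Istar b ->
  (forall i j, upper a i j -> upper b i j) -> rank b = rank a ->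
  forall i j, upper b i j -> upper a i j.
Proof. by move=> Ha Hb ab; rewrite !rank_upper //; apply: card_blocks_eq. Qed.

Lemma lower_rank_eq a b : Istar a -> Istar b ->
  (forall i j, lower a i j -> lower b i j) -> rank b = rank a ->
  forall i j, lower b i j -> lower a i j.
Proof. by move=> Ha Hb ab; rewrite !rank_lower //; apply: card_blocks_eq. Qed.

Definition upper_discrete a := forall i j, upper a i j -> i = j.

Lemma rank_nP a : Istar a -> rank a = n <-> upper_discrete a.
Proof.
move=> Ha; rewrite rank_upper //; split=> [rank_a i j aij | disc].
  have /imset_injP inj : #|[set block a (inl k) | k : 'I_n]| == #|'I_n|.
    by rewrite card_ord rank_a.
  by apply: inj; rewrite ?inE //; apply/eqP; rewrite eq_block.
by rewrite card_imset ?card_ord // => i j /eqP; rewrite eq_block // => /disc.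
Qed.

Lemma Istar_ppow a k : Istar a -> Istar (ppow a k).
Proof. by move=> Ha; rewrite /ppow; elim: k.-1 => [|m IHm] //=; apply: Istar_pmul. Qed.

Lemma sub_upper_ppow a k i j : upper a i j -> upper (ppow a k) i j.
Proof. by rewrite /ppow; elim: k.-1 => [|m IHm] //= /IHm; apply: sub_upper_pmul. Qed.

Lemma sub_lower_ppow a k i j : lower a i j -> lower (ppow a k) i j.
Proof. by rewrite /ppow; case: k.-1 => [|m] //=; apply: sub_lower_pmul. Qed.

Lemma upper_discrete_ppow a k : Istar a -> upper_discrete a -> upper_discrete (ppow a k).
Proof.
move=> Ha disc; rewrite /ppow; elim: k.-1 => [|m IHm] //= i j.
have Hm : Istar (ppow a m.+1) by apply: Istar_ppow.
move/(upper_pmul_sub Hm Ha) => aij; apply: IHm; apply: aij => u v /disc ->.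
exact: Istar_refl.
Qed.

Lemma Hclass_ppow e a k : Istar e -> projection e -> 0 < n -> rank e = n.-1 ->
  Istar a -> Hclass e (ppow a k) -> Hclass e a.
Proof.
move=> He Pe n_gt0 rank_e Ha [Hb /Hrel_kernels [bU bL]].
have rank_b : rank (ppow a k) = n.-1.
  by rewrite -rank_e; apply/eqP; rewrite eqn_leq !rank_le_upper // => i j; rewrite bU.
have le_ba : rank (ppow a k) <= rank a by apply: rank_le_upper => // i j /sub_upper_ppow.
have := rank_le_n Ha; case: (rank a =P n) => [rank_a _ | ne_an le_an].
  have /(rank_nP Hb) := upper_discrete_ppow (k:=k) Ha ((rank_nP Ha).1 rank_a).
  by rewrite rank_b => eq_n; move: n_gt0; rewrite -ltn_predL eq_n ltnn.
have eq_ba : rank (ppow a k) = rank a by lia.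
have ab_upper := upper_rank_eq Ha Hb (@sub_upper_ppow a k) eq_ba.
have ab_lower := lower_rank_eq Ha Hb (@sub_lower_ppow a k) eq_ba.
split=> //; apply: Hrel_of_kernels => // i j; apply/idP/idP.
- by move/(sub_upper_ppow k); rewrite bU.
- by rewrite -bU; apply: ab_upper.
- by move/(sub_lower_ppow k); rewrite bL.
- by rewrite -bL; apply: ab_lower.
Qed.

End IstarSemigroup.

Theorem mainTheorem11 (n : nat) (e : part n) :
  2 <= n -> Istar e -> pmul e e = e -> rank e = n.-1 ->
  is_subsemigroup (Hclass e) /\ isolated (Hclass e).
Proof.
move=> n_ge2 He ee rank_e; have Pe := idempotent_projection He ee.
split; first by split=> [a [] // | a b]; apply: Hclass_pmul.
by move=> a Ha k _; apply: Hclass_ppow => //; apply: ltnW.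
Qed.
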